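(* Let $G$ be a group with a gliding system $(\mathcal{G},\mathcal{I})$ such that there is an upper bound on the cardinality of sets of pairwise independent glides. Let $\mathcal{D}\subset G$ be an oriented regular set satisfying the square condition. Then for every $A\in\mathcal{D}$ the typing homomorphism $\mu_A:\pi_1(X_{\mathcal{D}},A)\to\mathcal{A}(G)$ is injective.
   Context: Gliding system $(\mathcal{G},\mathcal{I})$ in $G$: $\mathcal{G}\subset G\setminus\{1\}$ closed under inversion (glides), $\mathcal{I}\subset\mathcal{G}\times\mathcal{G}$ (independence) with $(s^{-1},t),(t,s)\in\mathcal{I}$ and $st=ts\ne1$ whenever $(s,t)\in\mathcal{I}$. Pre-cubic set: finite set $S$ of pairwise independent glides, $[S]=\prod_{s\in S}s$; cubic: pre-cubic with $[T_1]\ne[T_2]$ for distinct $T_1,T_2\subset S$. Glide complex $X_G$: cubed complex with one $k$-cube for each equivalence class of based cubes $(A,S)$ ($A\in G$, $S$ cubic of size $k$) under $(A,S)\sim([T]A,(S\setminus T)\cup\{t^{-1}:t\in T\})$; vertices $[T]A$, faces the cubes of $(A,S')$, $S'\subset S$; in particular 1-cells join $A$ and $sA$ for glides $s$. $X_{\mathcal{D}}$: subcomplex of cubes all of whose vertices lie in $\mathcal{D}$. $\mathcal{D}$ is regular if for every $A\in\mathcal{D}$ every pre-cubic $S$ with $sA\in\mathcal{D}$ ($s\in S$) and $stA\in\mathcal{D}$ (distinct $s,t\in S$) is cubic. Square condition: for $A\in\mathcal{D}$ and independent $s,t$ with $sA,tA\in\mathcal{D}$, $stA\in\mathcal{D}$.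 $\mathcal{A}(G)$ is the right-angled Artin group with generators $g_s$ ($s\in\mathcal{G}$) and relations $g_sg_t=g_tg_s$ for $(s,t)\in\mathcal{I}$. An orientation of $\mathcal{D}$ is a choice of direction of every 1-cell of $X_{\mathcal{D}}$ such that for every square with vertices $A,sA,tA,stA\in\mathcal{D}$ ($s,t$ independent), the 1-cells $A$–$sA$ and $tA$–$stA$ are either both directed towards $sA,stA$ or both towards $A,tA$ (and the same with $s,t$ exchanged); $\mathcal{D}$ is oriented if an orientation is fixed. For a 1-cell $e$ directed from $A$ to $B$ set $|e|=BA^{-1}\in\mathcal{G}$. For an edge path $\alpha$ through consecutive 1-cells $e_1,\dots,e_n$, with $\nu_k=+1$ if the path traverses $e_k$ along its orientation and $-1$ otherwise, put $\mu(\alpha)=g_{|e_1|}^{\nu_1}\cdots g_{|e_n|}^{\nu_n}$; this is invariant under homotopy rel endpoints and defines the typing homomorphism $\mu_A:\pi_1(X_{\mathcal{D}},A)\to\mathcal{A}(G)$. *)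

From Stdlib Require Import List.
Import ListNotations.
Set Implicit Arguments.

Record group := Group {
  carrier :> Type;
  mul : carrier -> carrier -> carrier;
  one : carrier;
  inv : carrier -> carrier;
  mulA : forall x y z, mul x (mul y z) = mul (mul x y) z;
  mul1g : forall x, mul one x = x;
  mulVg : forall x, mul (inv x) x = one
}.

Arguments mul {g}. Arguments inv {g}. Arguments one {g}.

Section Glide.
Context {G : group}.
Local Notation "x * y" := (mul x y).

Definition gliding_system (glide : G -> Prop) (I : G -> G -> Prop) : Prop :=
  ~ glide (one (g:=G)) /\
  (forall s, glide s -> glide (inv s)) /\
  (forall s t, I s t -> glide s /\ glide t) /\
  (forall s t, I s t -> I (inv s) t /\ I t s) /\
  (forall s t, I s t -> s * t = t * s /\ s * t <> @one G).

(* Finite sets of glides are represented by duplicate-free lists. *)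
Definition pairwise_indep (I : G -> G -> Prop) (S : list G) : Prop :=
  forall s t, In s S -> In t S -> s <> t -> I s t.

Definition pre_cubic (glide : G -> Prop) (I : G -> G -> Prop) (S : list G) : Prop :=
  NoDup S /\ (forall s, In s S -> glide s) /\ pairwise_indep I S.

Definition prodl (S : list G) : G := fold_right (@mul G) (one (g:=G)) S.

(* Subsets of S given by bit masks. *)
Fixpoint maskl (m : list bool) (S : list G) : list G :=
  match m, S with
  | b :: m', x :: S' => if b then x :: maskl m' S' else maskl m' S'
  | _, _ => []
  end.

Definition cubic glide I (S : list G) : Prop :=
  pre_cubic glide I S /\
  forall m1 m2 : list bool, length m1 = length S -> length m2 = length S ->
    m1 <> m2 -> prodl (maskl m1 S) <> prodl (maskl m2 S).

Definition bounded_independence glide I : Prop :=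
  exists N : nat, forall S, pre_cubic glide I S -> length S <= N.

Definition regular glide I (D : G -> Prop) : Prop :=
  forall A, D A -> forall S, pre_cubic glide I S ->
    (forall s, In s S -> D (s * A)) ->
    (forall s t, In s S -> In t S -> s <> t -> D (s * (t * A))) ->
    cubic glide I S.

Definition square_condition (I : G -> G -> Prop) (D : G -> Prop) : Prop :=
  forall A s t, D A -> I s t -> D (s * A) -> D (t * A) -> D (s * (t * A)).

(* 1-cells of X_D: A -- B with B A^-1 a glide, both endpoints in D. *)
Definition edge glide (D : G -> Prop) (A B : G) : Prop :=
  D A /\ D B /\ glide (B * inv A).

(* 2-cells of X_D: squares A, sA, tA, stA with {s,t} cubic. *)
Definition square_in (I : G -> G -> Prop) (D : G -> Prop) (A s t : G) : Prop :=
  I s t /\ s <> t /\ D A /\ D (s * A) /\ D (t * A) /\ D (s * (t * A)).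

(* Orientation: o A B = true means the 1-cell {A,B} is directed from A to B. *)
Definition orientation glide I (D : G -> Prop) (o : G -> G -> bool) : Prop :=
  (forall A B, edge glide D A B -> o A B = negb (o B A)) /\
  (forall A s t, square_in I D A s t ->
     o A (s * A) = o (t * A) (s * (t * A)) /\
     o A (t * A) = o (s * A) (t * (s * A))).

(* Edge paths as lists of vertices. *)
Fixpoint is_path glide (D : G -> Prop) (p : list G) : Prop :=
  match p with
  | [] => False
  | [A] => D A
  | A :: ((B :: _) as q) => edge glide D A B /\ is_path glide D q
  end.

Definition loop_at glide D (A : G) (p : list G) : Prop :=
  is_path glide D p /\ hd A p = A /\ last p A = A.

(* Homotopy rel endpoints of edge paths in (the 2-skeleton of) X_D. *)
Inductive htpy glide I (D : G -> Prop) : list G -> list G -> Prop :=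
| ht_refl p : htpy glide I D p p
| ht_sym p q : htpy glide I D p q -> htpy glide I D q p
| ht_trans p q r : htpy glide I D p q -> htpy glide I D q r -> htpy glide I D p r
| ht_back u v A B : edge glide D A B ->
    htpy glide I D (u ++ A :: B :: A :: v) (u ++ A :: v)
| ht_square u v A s t : square_in I D A s t ->
    htpy glide I D (u ++ A :: (s * A) :: (s * (t * A)) :: v)
                   (u ++ A :: (t * A) :: (s * (t * A)) :: v).

(* Words in the generators g_s^{+-1} of the RAAG A(G): (s, true) = g_s,
   (s, false) = g_s^{-1}. *)
Definition word := list (G * bool).

(* Equality in A(G) = <g_s (s glide) | g_s g_t = g_t g_s for (s,t) in I>. *)
Inductive raag_eq (I : G -> G -> Prop) : word -> word -> Prop :=
| re_refl w : raag_eq I w w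
| re_sym w w' : raag_eq I w w' -> raag_eq I w' w
| re_trans w1 w2 w3 : raag_eq I w1 w2 -> raag_eq I w2 w3 -> raag_eq I w1 w3
| re_cancel u v s b : raag_eq I (u ++ (s, b) :: (s, negb b) :: v) (u ++ v)
| re_comm u v s t : I s t ->
    raag_eq I (u ++ (s, true) :: (t, true) :: v) (u ++ (t, true) :: (s, true) :: v).

(* The letter g_{|e|}^{nu} for traversing the 1-cell e from A to B. *)
Definition letter (o : G -> G -> bool) (A B : G) : G * bool :=
  if o A B then (B * inv A, true) else (A * inv B, false).

Fixpoint mu (o : G -> G -> bool) (p : list G) : word :=
  match p with
  | A :: ((B :: _) as q) => letter o A B :: mu o q
  | _ => []
  end.

End Glide.

(** Left
       multiplication [lmul] of a word by a letter either cancels the letter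
       against the first occurrence of its inverse that can be shuffled to
       the front, or prepends it.  On reduced words [lmul] respects shuffling
       (swaps of commuting letters), commuting letters act commutingly and a
       letter followed by its inverse acts trivially; hence the normal form
       [fold_right lmul []] turns equality in [A(G)] into shuffle equivalence.
    2. Lifting.  In a path, a swap of two commuting consecutive letters is
       realized by a square of [X_D] (square condition plus orientation), and
       a letter followed by its inverse is a backtrack.  So every path is
       homotopic to a path with the same origin typed by its normal form, and
       shuffles of that type are realized by homotopies.
    3. A path is determined by its origin and its type, which concludes. *)

From Stdlib Require Import List Relations Classical ClassicalEpsilon Bool.
Import ListNotations.

Arguments mulA {g}. Arguments mul1g {g}. Arguments mulVg {g}.

(** Elementary group identities (only left axioms are given in [group]). *)
Section GroupFacts.
Context {G : group}.
Implicit Types x y z : G.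

Lemma mulKg x y : mul (inv x) (mul x y) = y.
Proof. rewrite mulA, mulVg, mul1g. reflexivity. Qed.

Lemma mulg_injl x y z : mul x y = mul x z -> y = z.
Proof. intro H. rewrite <- (mulKg x y), <- (mulKg x z), H. reflexivity. Qed.

Lemma mulgV x : mul x (inv x) = one.
Proof.
  (* x x^-1 is an idempotent, and the only idempotent of a group is 1. *)
  set (e := mul x (inv x)).
  assert (He : mul e e = e).
  { unfold e. rewrite <- mulA, (mulA (inv x) x (inv x)), mulVg, mul1g. reflexivity. }
  rewrite <- (mulKg e e), He. apply mulVg.
Qed.

Lemma mulg1 x : mul x one = x.
Proof. rewrite <- (mulVg x), mulA, mulgV, mul1g. reflexivity. Qed.

Lemma mulgK x y : mul (mul y x) (inv x) = y.
Proof. rewrite <- mulA, mulgV, mulg1. reflexivity. Qed.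

Lemma mulgKV x y : mul (mul y (inv x)) x = y.
Proof. rewrite <- mulA, mulVg, mulg1. reflexivity. Qed.

Lemma mulg_injr x y z : mul y x = mul z x -> y = z.
Proof. intro H. rewrite <- (mulgK x y), <- (mulgK x z), H. reflexivity. Qed.

Lemma invgK x : inv (inv x) = x.
Proof. apply (mulg_injr (inv x)). rewrite mulVg, mulgV. reflexivity. Qed.

Lemma invgM x y : inv (mul x y) = mul (inv y) (inv x).
Proof.
  apply (mulg_injl (mul x y)). rewrite mulgV.
  rewrite <- mulA, (mulA y (inv y)), mulgV, mul1g, mulgV. reflexivity.
Qed.

Lemma invg_div x y : inv (mul x (inv y)) = mul y (inv x).
Proof. rewrite invgM, invgK. reflexivity. Qed.

Lemma div_mul_inv x s : mul x (inv (mul s x)) = inv s.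
Proof. rewrite invgM, mulA, mulgV, mul1g. reflexivity. Qed.

End GroupFacts.

Lemma app_cons_uniq {A : Type} (c : A) r1 q1 r2 q2 :
  ~ In c r1 -> ~ In c r2 -> r1 ++ c :: q1 = r2 ++ c :: q2 -> r1 = r2 /\ q1 = q2.
Proof.
  revert r2. induction r1 as [|a r1 IH]; intros [|b r2] H1 H2 E; simpl in *.
  - inversion E; auto.
  - inversion E; subst. exfalso; auto.
  - inversion E; subst. exfalso; auto.
  - inversion E; subst. destruct (IH r2) as [-> ->]; auto.
Qed.

#[local] Hint Rewrite <- app_assoc : lists.
#[local] Hint Rewrite app_nil_r : lists.
Ltac list_eq := subst; repeat progress (simpl; autorewrite with lists); try reflexivity.

(** * Normal forms in the right-angled Artin group *)
Section RaagNormalForm.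
Context {G : group} (I : G -> G -> Prop).
Hypothesis I_irrefl : forall s, ~ I s s.
Hypothesis I_symm : forall s t, I s t -> I t s.

Local Notation letters := (list (G * bool)).

Definition inv_letter (x : G * bool) : G * bool := (fst x, negb (snd x)).
Definition commute (x y : G * bool) : Prop := I (fst x) (fst y).

Lemma inv_letterK x : inv_letter (inv_letter x) = x.
Proof. destruct x as [s b]. unfold inv_letter. simpl. rewrite negb_involutive. reflexivity. Qed.

Lemma commute_sym x y : commute x y -> commute y x.
Proof. unfold commute. auto. Qed.

Lemma commuting_notin_inv x r : Forall (commute x) r -> ~ In (inv_letter x) r.
Proof.
  rewrite Forall_forall. intros HF Hin. exact (I_irrefl _ (HF _ Hin)).
Qed.

Definition swap_step (w w' : letters) : Prop :=
  exists u v a b, commute a b /\ w = u ++ a :: b :: v /\ w' = u ++ b :: a :: v.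

Definition shuffle : letters -> letters -> Prop := clos_refl_trans _ swap_step.

Lemma swap_step_sym w w' : swap_step w w' -> swap_step w' w.
Proof.
  intros (u & v & a & b & H & -> & ->). exists u, v, b, a. auto using commute_sym.
Qed.

Lemma shuffle_sym w w' : shuffle w w' -> shuffle w' w.
Proof.
  induction 1; [apply rt_step, swap_step_sym | apply rt_refl | eapply rt_trans]; eauto.
Qed.

Lemma shuffle_app_l u w w' : shuffle w w' -> shuffle (u ++ w) (u ++ w').
Proof.
  induction 1 as [w w' (u' & v & a & b & H & -> & ->)| |]; [|apply rt_refl|eapply rt_trans; eauto].
  apply rt_step. exists (u ++ u'), v, a, b. split; [exact H | split; list_eq].
Qed.

Lemma shuffle_swap u v a b : commute a b -> shuffle (u ++ a :: b :: v) (u ++ b :: a :: v).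
Proof. intro H. apply rt_step. exists u, v, a, b. auto. Qed.

Lemma shuffle_move c p q : Forall (commute c) p -> shuffle (c :: p ++ q) (p ++ c :: q).
Proof.
  induction p as [|a p IH]; intro HF; simpl; [apply rt_refl|].
  inversion HF; subst. eapply rt_trans.
  - apply (shuffle_swap [] (p ++ q) c a). assumption.
  - apply (shuffle_app_l [a]). auto.
Qed.

(** [x] cancels into [t] when [t = r ++ x^-1 :: q] and [x] commutes with [r]:
    then [x t] equals [r q] in [A(G)]. *)
Definition cancels_into x (t r q : letters) : Prop :=
  t = r ++ inv_letter x :: q /\ Forall (commute x) r.

Lemma cancels_into_unique x t r q r' q' :
  cancels_into x t r q -> cancels_into x t r' q' -> r = r' /\ q = q'.
Proof.
  intros [E HF] [E' HF']. subst.
  apply app_cons_uniq with (c := inv_letter x); auto using commuting_notin_inv.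
Qed.

Lemma cancels_into_dec x t :
  (exists r q, cancels_into x t r q) \/ (forall r q, ~ cancels_into x t r q).
Proof.
  destruct (classic (exists r q, cancels_into x t r q)) as [H|H]; auto.
  right. intros r q Hr. apply H. eauto.
Qed.

Definition lmul x (t : letters) : letters :=
  match excluded_middle_informative (exists rq, cancels_into x t (fst rq) (snd rq)) with
  | left H => let rq := proj1_sig (constructive_indefinite_description _ H) in fst rq ++ snd rq
  | right _ => x :: t
  end.

Lemma lmul_cancel x t r q : cancels_into x t r q -> lmul x t = r ++ q.
Proof.
  intro H. unfold lmul. destruct excluded_middle_informative as [H1|H1].
  - destruct (constructive_indefinite_description _ H1) as [[r' q'] H']. simpl in *.
    destruct (cancels_into_unique _ _ _ _ _ _ H H') as [-> ->]. reflexivity.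
  - exfalso. apply H1. exists (r, q). exact H.
Qed.

Lemma lmul_prepend x t : (forall r q, ~ cancels_into x t r q) -> lmul x t = x :: t.
Proof.
  intro H. unfold lmul. destruct excluded_middle_informative as [[[r q] Hr]|_]; auto.
  exfalso. exact (H _ _ Hr).
Qed.

Definition reduced (t : letters) : Prop :=
  forall u z m v, t = u ++ z :: m ++ inv_letter z :: v -> ~ Forall (commute z) m.

Lemma reduced_nil : reduced [].
Proof. intros [|] z m v E; discriminate. Qed.

Lemma reduced_remove r y q :
  reduced (r ++ y :: q) -> Forall (commute y) r -> reduced (r ++ q).
Proof.
  intros Hred HF u z m v E Hm.
  apply app_eq_app in E as [l [[E1 E2]|[E1 E2]]].
  - destruct l as [|a l'].
    + simpl in E2. subst. apply (Hred (u ++ [y]) z m v); [list_eq | exact Hm].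
    + injection E2 as <- E2. subst r.
      (* z lies in r, so z commutes with y. *)
      assert (Hzy : commute z y).
      { apply commute_sym. apply Forall_app in HF as [_ HF]. inversion HF. assumption. }
      apply app_eq_app in E2 as [k [[F1 F2]|[F1 F2]]].
      * subst. apply (Hred u z (l' ++ y :: k) v); [list_eq|].
        apply Forall_app in Hm as [Hm1 Hm2]. apply Forall_app; auto.
      * destruct k as [|b k'].
        -- simpl in F2. subst. apply (Hred u z (m ++ [y]) v); [list_eq|].
           apply Forall_app; auto.
        -- injection F2 as <- F2. subst.
           apply (Hred u z m (k' ++ y :: q)); [list_eq | exact Hm].
  - subst. apply (Hred (r ++ y :: l) z m v); [list_eq | exact Hm].
Qed.

Lemma reduced_prepend x t :
  reduced t -> (forall r q, ~ cancels_into x t r q) -> reduced (x :: t).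
Proof.
  intros Hred Hn [|a u] z m v E Hm; injection E as <- E.
  - apply (Hn m v). split; assumption.
  - exact (Hred u z m v E Hm).
Qed.

Lemma reduced_lmul x t : reduced t -> reduced (lmul x t).
Proof.
  intro Hred. destruct (cancels_into_dec x t) as [(r & q & Hr)|Hn].
  - rewrite (lmul_cancel _ _ _ _ Hr). destruct Hr as [-> HF].
    exact (reduced_remove _ _ _ Hred HF).
  - rewrite (lmul_prepend _ _ Hn). apply reduced_prepend; assumption.
Qed.

Lemma reduced_no_recancel x r q :
  reduced (r ++ inv_letter x :: q) -> Forall (commute x) r ->
  forall r' q', ~ cancels_into (inv_letter x) (r ++ q) r' q'.
Proof.
  intros Hred HF r' q' [E HF']. rewrite inv_letterK in E.
  apply app_eq_app in E as [l [[E1 E2]|[E1 E2]]].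
  - destruct l as [|a l'].
    + simpl in E2. subst.
      refine (Hred r' (inv_letter x) [] q' _ (Forall_nil _)). rewrite inv_letterK. list_eq.
    + injection E2 as <- E2. subst.
      apply (commuting_notin_inv (inv_letter x) (r' ++ x :: l')); [exact HF|].
      rewrite inv_letterK. apply in_or_app. simpl. auto.
  - subst. refine (Hred r (inv_letter x) l q' _ _); [rewrite inv_letterK; list_eq|].
    apply Forall_app in HF' as [_ H]. exact H.
Qed.

Lemma lmul_inv x t : reduced t -> shuffle (lmul (inv_letter x) (lmul x t)) t.
Proof.
  intro Hred. destruct (cancels_into_dec x t) as [(r & q & Hr)|Hn].
  - rewrite (lmul_cancel _ _ _ _ Hr). destruct Hr as [-> HF].
    rewrite (lmul_prepend _ _ (reduced_no_recancel _ _ _ Hred HF)).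
    apply shuffle_move. exact HF.
  - rewrite (lmul_prepend _ _ Hn), (lmul_cancel (inv_letter x) (x :: t) [] t).
    + apply rt_refl.
    + split; [rewrite inv_letterK; reflexivity | constructor].
Qed.

Lemma cancels_into_swap x t1 t2 r s : swap_step t1 t2 -> cancels_into x t1 r s ->
  exists r' s', cancels_into x t2 r' s' /\ (r ++ s = r' ++ s' \/ swap_step (r ++ s) (r' ++ s')).
Proof.
  intros (u & v & a & b & Hab & -> & ->) [E HF]. symmetry in E.
  apply app_eq_app in E as [l [[E1 E2]|[E1 E2]]].
  - destruct l as [|c l'].
    + injection E2 as -> E2. subst. rewrite app_nil_r in HF.
      exists (u ++ [b]), v. split; [split; [list_eq | apply Forall_app; auto] | left; list_eq].
    + injection E2 as <- E2. destruct l' as [|d l''].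
      * injection E2 as -> E2. subst. apply Forall_app in HF as [HF _].
        exists u, (a :: s). split; [split; auto | left; list_eq].
      * injection E2 as <- E2. subst.
        apply Forall_app in HF as [HF1 HF2]. inversion HF2 as [|? ? Ha HF3]; subst.
        inversion HF3; subst.
        exists (u ++ b :: a :: l''), s. split.
        -- split; [list_eq | apply Forall_app; auto].
        -- right. exists u, (l'' ++ s), a, b. split; [exact Hab | split; list_eq].
  - destruct l as [|c l'].
    + injection E2 as <- E2. subst. rewrite app_nil_r.
      exists (r ++ [b]), v. split; [split; [list_eq | apply Forall_app; auto] | left; list_eq].
    + injection E2 as <- E2. subst.
      exists r, (l' ++ b :: a :: v). split; [split; [list_eq | exact HF]|].
      right. exists (r ++ l'), v, a, b. split; [exact Hab | split; list_eq].
Qed.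

Lemma lmul_swap x t1 t2 : swap_step t1 t2 -> shuffle (lmul x t1) (lmul x t2).
Proof.
  intro Hs. destruct (cancels_into_dec x t1) as [(r & q & Hr)|Hn].
  - destruct (cancels_into_swap _ _ _ _ _ Hs Hr) as (r' & s' & Hr' & Hrs).
    rewrite (lmul_cancel _ _ _ _ Hr), (lmul_cancel _ _ _ _ Hr').
    destruct Hrs as [-> | Hsw]; [apply rt_refl | apply rt_step; exact Hsw].
  - destruct (cancels_into_dec x t2) as [(r & q & Hr)|Hn2].
    + exfalso. destruct (cancels_into_swap _ _ _ _ _ (swap_step_sym _ _ Hs) Hr)
        as (r' & s' & Hr' & _).
      exact (Hn _ _ Hr').
    + rewrite (lmul_prepend _ _ Hn), (lmul_prepend _ _ Hn2).
      apply (shuffle_app_l [x]), rt_step. exact Hs.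
Qed.

Lemma lmul_shuffle x t1 t2 : shuffle t1 t2 -> shuffle (lmul x t1) (lmul x t2).
Proof.
  induction 1; [apply lmul_swap | apply rt_refl | eapply rt_trans]; eauto.
Qed.

Lemma no_cancel_cons x y t : commute x y -> (forall r q, ~ cancels_into x t r q) ->
  forall r q, ~ cancels_into x (y :: t) r q.
Proof.
  intros Hxy Hn [|c r] q [E HF]; injection E as E1 E2.
  - subst. exact (I_irrefl _ Hxy).
  - inversion HF; subst. apply (Hn r q). split; auto.
Qed.

Lemma commute_inv_neq x y : commute x y -> inv_letter y <> inv_letter x.
Proof.
  intros Hxy E. injection E as E _. unfold commute in Hxy. rewrite E in Hxy.
  exact (I_irrefl _ Hxy).
Qed.

(* Both letters cancel: they cancel at distinct places, in either order. *)
Lemma lmul_comm_both x y t p q p' q' : commute x y ->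
  cancels_into y t p q -> cancels_into x t p' q' -> lmul x (lmul y t) = lmul y (lmul x t).
Proof.
  intros Hxy Hr Hr'. rewrite (lmul_cancel _ _ _ _ Hr), (lmul_cancel _ _ _ _ Hr').
  destruct Hr as [Et HF], Hr' as [Et' HF'].
  rewrite Et in Et'. apply app_eq_app in Et' as [l [[E1 E2]|[E1 E2]]].
  - destruct l as [|c l'].
    + destruct (commute_inv_neq _ _ Hxy (eq_sym (f_equal (hd (inv_letter y)) E2))).
    + injection E2 as <- E2. subst p q'.
      apply Forall_app in HF as [HF1 HF2]. inversion HF2; subst.
      rewrite (lmul_cancel x ((p' ++ inv_letter x :: l') ++ q) p' (l' ++ q));
        [| split; [list_eq | exact HF']].
      rewrite (lmul_cancel y (p' ++ l' ++ inv_letter y :: q) (p' ++ l') q);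
        [list_eq | split; [list_eq | apply Forall_app; auto]].
  - destruct l as [|c l'].
    + destruct (commute_inv_neq _ _ Hxy (f_equal (hd (inv_letter y)) E2)).
    + injection E2 as <- E2. subst p' q.
      apply Forall_app in HF' as [HF1 HF2]. inversion HF2; subst.
      rewrite (lmul_cancel x (p ++ l' ++ inv_letter x :: q') (p ++ l') q');
        [| split; [list_eq | apply Forall_app; auto]].
      rewrite (lmul_cancel y ((p ++ inv_letter y :: l') ++ q') p (l' ++ q'));
        [list_eq | split; [list_eq | exact HF]].
Qed.

(* Only [y] cancels: then [y] cancels past the prepended [x], and [x] still
   does not cancel afterwards. *)
Lemma lmul_comm_one x y t p q : commute x y ->
  cancels_into y t p q -> (forall r s, ~ cancels_into x t r s) ->
  lmul x (lmul y t) = lmul y (lmul x t).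
Proof.
  intros Hxy Hr Hn. rewrite (lmul_cancel _ _ _ _ Hr), (lmul_prepend _ _ Hn).
  destruct Hr as [Et HF].
  rewrite (lmul_cancel y (x :: t) (x :: p) q);
    [| split; [subst; reflexivity | constructor; auto using commute_sym]].
  apply lmul_prepend. intros r s [E HF2].
  apply app_eq_app in E as [l [[E1 E2]|[E1 E2]]].
  - destruct l as [|c l'].
    + simpl in E2. subst. rewrite app_nil_r in *.
      apply (Hn (r ++ [inv_letter y]) s). split; [list_eq | apply Forall_app; auto].
    + injection E2 as <- E2. subst.
      apply (Hn r (l' ++ inv_letter y :: q)). split; [list_eq | exact HF2].
  - subst. apply (Hn (p ++ inv_letter y :: l) s). split; [list_eq|].
    apply Forall_app in HF2 as [H1 H2]. apply Forall_app; auto.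
Qed.

Lemma lmul_comm x y t : commute x y -> shuffle (lmul x (lmul y t)) (lmul y (lmul x t)).
Proof.
  intro Hxy.
  destruct (cancels_into_dec y t) as [(p & q & Hy)|Hny],
           (cancels_into_dec x t) as [(p' & q' & Hx)|Hnx].
  - erewrite lmul_comm_both by eassumption. apply rt_refl.
  - erewrite lmul_comm_one by eassumption. apply rt_refl.
  - erewrite (lmul_comm_one y x) by eauto using commute_sym. apply rt_refl.
  - rewrite (lmul_prepend _ _ Hny), (lmul_prepend _ _ Hnx).
    rewrite (lmul_prepend x (y :: t)) by (apply no_cancel_cons; assumption).
    rewrite (lmul_prepend y (x :: t)) by (apply no_cancel_cons; auto using commute_sym).
    apply (shuffle_swap [] t x y). exact Hxy.
Qed.

Definition normal_form (w : letters) : letters := fold_right lmul [] w.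

Lemma reduced_fold u t : reduced t -> reduced (fold_right lmul t u).
Proof. intro H. induction u; simpl; auto using reduced_lmul. Qed.

Lemma fold_shuffle u t t' : shuffle t t' -> shuffle (fold_right lmul t u) (fold_right lmul t' u).
Proof. intro H. induction u; simpl; auto using lmul_shuffle. Qed.

Lemma normal_form_raag_eq w w' : raag_eq I w w' -> shuffle (normal_form w) (normal_form w').
Proof.
  unfold normal_form. induction 1.
  - apply rt_refl.
  - apply shuffle_sym. assumption.
  - eapply rt_trans; eassumption.
  - rewrite !fold_right_app. apply fold_shuffle. simpl.
    pose proof (lmul_inv (s, negb b) _ (reduced_fold v [] reduced_nil)) as H.
    unfold inv_letter in H. simpl in H. rewrite negb_involutive in H. exact H.
  - rewrite !fold_right_app. apply fold_shuffle, lmul_comm. assumption.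
Qed.

End RaagNormalForm.

(** * Edge paths and their types *)
Section Paths.
Context {G : group} (glide : G -> Prop) (I : G -> G -> Prop) (D : G -> Prop)
  (o : G -> G -> bool).

Lemma mu_app p1 (X : G) p2 : mu o (p1 ++ X :: p2) = mu o (p1 ++ [X]) ++ mu o (X :: p2).
Proof.
  induction p1 as [|a [|b p1] IH]; simpl; [reflexivity | reflexivity |].
  simpl in IH. rewrite IH. reflexivity.
Qed.

Lemma is_path_app p1 (X : G) p2 :
  is_path glide D (p1 ++ X :: p2) <-> is_path glide D (p1 ++ [X]) /\ is_path glide D (X :: p2).
Proof.
  induction p1 as [|a [|b p1] IH]; simpl in *.
  - split; [|intros [_ H]; exact H]. intro H. split; [|exact H].
    destruct p2; [exact H | apply H].
  - split; [intros [H1 H2] | intros [[H1 _] H2]; exact (conj H1 H2)].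
    split; [split; [exact H1 | apply H1] | exact H2].
  - rewrite IH. symmetry. apply and_assoc.
Qed.

Lemma path_split u w p : is_path glide D p -> mu o p = u ++ w ->
  exists p1 X p2, p = p1 ++ X :: p2 /\ mu o (p1 ++ [X]) = u /\ mu o (X :: p2) = w.
Proof.
  revert p. induction u as [|c u IH]; intros p Hp E.
  - destruct p as [|X p2]; [contradiction|]. exists [], X, p2. auto.
  - destruct p as [|a [|b r]]; [contradiction | discriminate |].
    injection E as Ec E. destruct Hp as [_ Hp].
    destruct (IH (b :: r) Hp E) as (p1 & X & p2 & Ep & Emu & Ew).
    exists (a :: p1), X, p2. rewrite Ep. split; [reflexivity | split; [|exact Ew]].
    destruct p1 as [|d p1]; injection Ep as -> _; simpl in *; subst; reflexivity.
Qed.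

Lemma htpy_cons c p q : htpy glide I D p q -> htpy glide I D (c :: p) (c :: q).
Proof.
  induction 1.
  - apply ht_refl.
  - apply ht_sym; assumption.
  - eapply ht_trans; eassumption.
  - apply ht_back with (u := c :: u). assumption.
  - apply ht_square with (u := c :: u). assumption.
Qed.

Lemma letter_backtrack X Y Z : letter o Y Z = inv_letter (letter o X Y) -> Z = X.
Proof.
  unfold letter, inv_letter.
  destruct (o X Y), (o Y Z); simpl; intro E; injection E as E1; try discriminate.
  - apply mulg_injl in E1. rewrite <- (invgK Z), E1, invgK. reflexivity.
  - apply mulg_injr in E1. assumption.
Qed.

Lemma letter_target X Y Y' : letter o X Y = letter o X Y' -> Y = Y'.
Proof.
  unfold letter. destruct (o X Y), (o X Y'); simpl; intro E; injection E as E1; try discriminate.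
  - apply mulg_injr in E1. assumption.
  - apply mulg_injl in E1. rewrite <- (invgK Y), E1, invgK. reflexivity.
Qed.

Lemma loop_origin A p : loop_at glide D A p -> hd_error p = Some A.
Proof. intros (Hp & Eh & _). destruct p; [contradiction | simpl in *; congruence]. Qed.

Lemma path_unique p q : is_path glide D p -> is_path glide D q -> hd_error p = hd_error q ->
  mu o p = mu o q -> p = q.
Proof.
  revert q. induction p as [|X p IH]; intros q Hp Hq Eh Em; [contradiction|].
  destruct q as [|X' q]; [contradiction|]. injection Eh as <-.
  destruct p as [|Y p], q as [|Y' q]; try discriminate; [reflexivity|].
  injection Em as E1 E2. apply letter_target in E1. subst Y'.
  f_equal. apply IH; [apply Hp | apply Hq | reflexivity | exact E2].
Qed.

End Paths.

(** * Lifting relations of [A(G)] to homotopies of paths *)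
Section Lifting.
Context {G : group} (glide : G -> Prop) (I : G -> G -> Prop) (D : G -> Prop)
  (o : G -> G -> bool).
Hypothesis Hgs : gliding_system glide I.
Hypothesis Hor : orientation glide I D o.
Hypothesis Hsq : square_condition I D.

Lemma indep_sym s t : I s t -> I t s.
Proof. destruct Hgs as (_ & _ & _ & Hi & _). apply Hi. Qed.

Lemma indep_inv_l s t : I s t -> I (inv s) t.
Proof. destruct Hgs as (_ & _ & _ & Hi & _). apply Hi. Qed.

Lemma indep_comm s t : I s t -> mul s t = mul t s.
Proof. destruct Hgs as (_ & _ & _ & _ & Hc). apply Hc. Qed.

(* A glide is never independent of itself, since s^-1 s = 1. *)
Lemma indep_irrefl s : ~ I s s.
Proof.
  intro H. destruct Hgs as (_ & _ & _ & _ & Hc).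
  apply (proj2 (Hc _ _ (indep_inv_l _ _ H))). apply mulVg.
Qed.

Lemma indep_up_to_inv a b s t :
  I a b -> (a = s \/ a = inv s) -> (b = t \/ b = inv t) -> I s t.
Proof.
  intros H Ha Hb.
  assert (Hs : I s b).
  { destruct Ha as [-> | ->]; [exact H|]. rewrite <- (invgK s). apply indep_inv_l, H. }
  apply indep_sym. destruct Hb as [-> | ->]; [apply indep_sym, Hs|].
  rewrite <- (invgK t). apply indep_inv_l, indep_sym, Hs.
Qed.

Lemma letter_glide A B :
  fst (letter o A B) = mul B (inv A) \/ fst (letter o A B) = inv (mul B (inv A)).
Proof. unfold letter. destruct (o A B); simpl; [left | right; rewrite invg_div]; reflexivity. Qed.

Lemma indep_comm_at X s t : I s t -> mul t (mul s X) = mul s (mul t X).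
Proof. intro H. rewrite !mulA, (indep_comm _ _ H). reflexivity. Qed.

Lemma square_in_sym X s t : square_in I D X s t -> square_in I D X t s.
Proof.
  intros (Hst & Hne & DX & DsX & DtX & DstX).
  rewrite <- (indep_comm_at X s t Hst) in DstX.
  repeat split; auto using indep_sym.
Qed.

Lemma parallel_letters X s t :
  square_in I D X s t -> letter o X (mul s X) = letter o (mul t X) (mul s (mul t X)).
Proof.
  intro Hsquare. destruct Hor as [_ Ho]. destruct (Ho X s t Hsquare) as [Eo _].
  unfold letter. rewrite <- Eo.
  destruct (o X (mul s X)); rewrite ?mulgK, ?div_mul_inv; reflexivity.
Qed.

(* Two consecutive 1-cells X -- sX -- tsX with commuting letters span a square
   of X_D: its fourth corner tX lies in D by the square condition at sX. *)
Lemma corner_square X s t :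
  edge glide D X (mul s X) -> edge glide D (mul s X) (mul t (mul s X)) ->
  commute I (letter o X (mul s X)) (letter o (mul s X) (mul t (mul s X))) ->
  square_in I D X t s.
Proof.
  intros (DX & DsX & _) (_ & DtsX & _) Hc.
  assert (HI : I s t).
  { pose proof (letter_glide X (mul s X)) as Ls.
    pose proof (letter_glide (mul s X) (mul t (mul s X))) as Lt.
    rewrite mulgK in Ls, Lt. exact (indep_up_to_inv _ _ _ _ Hc Ls Lt). }
  assert (DtX : D (mul t X)).
  { pose proof (Hsq (mul s X) (inv s) t DsX (indep_inv_l _ _ HI)) as H.
    rewrite mulKg, (indep_comm_at _ _ _ HI), mulKg in H.
    apply H; [exact DX | rewrite <- (indep_comm_at _ _ _ HI); exact DtsX]. }
  repeat split; auto using indep_sym.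
  intro E. subst. exact (indep_irrefl _ HI).
Qed.

Lemma square_lift X Y Z : edge glide D X Y -> edge glide D Y Z ->
  commute I (letter o X Y) (letter o Y Z) ->
  exists Y', edge glide D X Y' /\ edge glide D Y' Z /\
    letter o X Y' = letter o Y Z /\ letter o Y' Z = letter o X Y /\
    forall u v, htpy glide I D (u ++ X :: Y :: Z :: v) (u ++ X :: Y' :: Z :: v).
Proof.
  intros eXY eYZ Hc.
  (* Write Y = s X and Z = t (s X) for glides s, t. *)
  assert (EY : Y = mul (mul Y (inv X)) X) by (symmetry; apply mulgKV).
  assert (EZ : Z = mul (mul Z (inv Y)) Y) by (symmetry; apply mulgKV).
  set (s := mul Y (inv X)) in *. set (t := mul Z (inv Y)) in *.
  clearbody s t. subst Z Y.
  pose proof (corner_square X s t eXY eYZ Hc) as Hsquare.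
  pose proof (indep_comm_at X s t (indep_sym _ _ (proj1 Hsquare))) as Hts.
  destruct eXY as (DX & DsX & gs), eYZ as (_ & DtsX & gt).
  pose proof Hsquare as (_ & _ & _ & DtX & _).
  exists (mul t X). split; [|split; [|split; [|split]]].
  - repeat split; [exact DX | exact DtX | rewrite mulgK in gt |- *; exact gt].
  - repeat split; [exact DtX | exact DtsX | rewrite Hts, mulgK; rewrite mulgK in gs; exact gs].
  - exact (parallel_letters X t s Hsquare).
  - rewrite Hts. symmetry. exact (parallel_letters X s t (square_in_sym _ _ _ Hsquare)).
  - intros u v. apply ht_sym, ht_square. exact Hsquare.
Qed.

Definition lifts_to (p : list G) (w : list (G * bool)) : Prop :=
  exists p', is_path glide D p' /\ hd_error p' = hd_error p /\
    htpy glide I D p p' /\ mu o p' = w.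

Lemma lifts_to_trans p w w' : lifts_to p w ->
  (forall q, is_path glide D q -> mu o q = w -> lifts_to q w') -> lifts_to p w'.
Proof.
  intros (p1 & Hp1 & Eh1 & Ht1 & Em1) Hw.
  destruct (Hw p1 Hp1 Em1) as (p2 & Hp2 & Eh2 & Ht2 & Em2).
  exists p2. split; [exact Hp2|]. split; [congruence|].
  split; [eapply ht_trans; eassumption | exact Em2].
Qed.

Lemma lift_swap p u a b v : is_path glide D p -> mu o p = u ++ a :: b :: v ->
  commute I a b -> lifts_to p (u ++ b :: a :: v).
Proof.
  intros Hp E Hab.
  destruct (path_split glide D o _ _ _ Hp E) as (p1 & X & p2 & -> & E1 & E2).
  destruct p2 as [|Y [|Z p3]]; try discriminate.
  injection E2 as <- <- Ev.
  apply is_path_app in Hp as [Hp1 (eXY & eYZ & Hp3)].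
  destruct (square_lift X Y Z eXY eYZ Hab) as (Y' & eXY' & eY'Z & l1 & l2 & Hh).
  exists (p1 ++ X :: Y' :: Z :: p3). split; [|split; [|split]].
  - apply is_path_app. exact (conj Hp1 (conj eXY' (conj eY'Z Hp3))).
  - destruct p1; reflexivity.
  - apply Hh.
  - rewrite mu_app, E1. simpl. rewrite l1, l2, Ev. reflexivity.
Qed.

Lemma lift_shuffle w w' : shuffle I w w' ->
  forall p, is_path glide D p -> mu o p = w -> lifts_to p w'.
Proof.
  induction 1 as [w w' (u & v & a & b & Hab & -> & ->) | w | w1 w2 w3 _ IH12 _ IH23];
    intros p Hp E.
  - exact (lift_swap p u a b v Hp E Hab).
  - exists p. repeat split; [exact Hp | apply ht_refl | exact E].
  - exact (lifts_to_trans p w2 w3 (IH12 p Hp E) IH23).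
Qed.

Lemma lift_backtrack p u x v : is_path glide D p -> mu o p = u ++ x :: inv_letter x :: v ->
  lifts_to p (u ++ v).
Proof.
  intros Hp E.
  destruct (path_split glide D o _ _ _ Hp E) as (p1 & X & p2 & -> & E1 & E2).
  destruct p2 as [|Y [|Z p3]]; try discriminate.
  injection E2 as Ex Ex' Ev. rewrite <- Ex in Ex'.
  apply letter_backtrack in Ex'. subst Z.
  apply is_path_app in Hp as [Hp1 (eXY & eYX & Hp3)].
  exists (p1 ++ X :: p3). split; [|split; [|split]].
  - apply is_path_app. split; assumption.
  - destruct p1; reflexivity.
  - apply ht_back. exact eXY.
  - rewrite mu_app, E1. f_equal. exact Ev.
Qed.

Lemma lift_normal_form p : is_path glide D p -> lifts_to p (normal_form I (mu o p)).
Proof.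
  induction p as [|X [|Y r] IH]; intro Hp; [contradiction | |].
  { exists [X]. repeat split; [exact Hp | apply ht_refl]. }
  destruct Hp as [eXY Hr].
  destruct (IH Hr) as ([|Y' r'] & Hp0 & Eh0 & Ht0 & Em0); [contradiction|].
  injection Eh0 as ->.
  (* First replace the tail by its normal lift, then multiply by the first letter. *)
  assert (Hlift : lifts_to (X :: Y :: r) (letter o X Y :: normal_form I (mu o (Y :: r)))).
  { exists (X :: Y :: r'). split; [split; assumption|].
    split; [reflexivity | split; [apply htpy_cons; exact Ht0 | simpl; f_equal; exact Em0]]. }
  change (normal_form I (mu o (X :: Y :: r)))
    with (lmul I (letter o X Y) (normal_form I (mu o (Y :: r)))).
  set (x := letter o X Y) in *. set (T := normal_form I (mu o (Y :: r))) in *.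
  destruct (cancels_into_dec I x T) as [(r0 & q & Hrem)|Hn].
  - rewrite (lmul_cancel I indep_irrefl _ _ _ _ Hrem). destruct Hrem as [ET HF].
    rewrite ET in Hlift. apply (lifts_to_trans _ _ _ Hlift). intros p1 Hp1 Em1.
    apply (lifts_to_trans _ _ _ (lift_shuffle _ _ (shuffle_move I x r0 _ HF) p1 Hp1 Em1)).
    intros p2 Hp2 Em2. exact (lift_backtrack p2 r0 x q Hp2 Em2).
  - rewrite (lmul_prepend I _ _ Hn). exact Hlift.
Qed.

End Lifting.

Theorem theorem5p3 (G : group) (glide : G -> Prop) (I : G -> G -> Prop)
  (Hgs : gliding_system glide I)
  (Hbound : bounded_independence glide I)
  (D : G -> Prop) (o : G -> G -> bool)
  (Hor : orientation glide I D o)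
  (Hreg : regular glide I D)
  (Hsq : square_condition I D) :
  forall A : G, D A ->
  forall p q : list G, loop_at glide D A p -> loop_at glide D A q ->
    raag_eq I (mu o p) (mu o q) -> htpy glide I D p q.
Proof.
  intros A _ p q Hloop_p Hloop_q Hpq.
  pose proof (loop_origin glide D A p Hloop_p) as Hp0.
  pose proof (loop_origin glide D A q Hloop_q) as Hq0.
  (* Replace both loops by homotopic paths typed by normal forms. *)
  destruct (lift_normal_form glide I D o Hgs Hor Hsq p (proj1 Hloop_p))
    as (p' & Hp' & Ehp & Htp & Emp).
  destruct (lift_normal_form glide I D o Hgs Hor Hsq q (proj1 Hloop_q))
    as (q' & Hq' & Ehq & Htq & Emq).
  (* The two normal forms differ by a shuffle, which is realized by squares. *)
  pose proof (normal_form_raag_eq I (indep_irrefl glide I Hgs) (indep_sym glide I Hgs)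
                _ _ Hpq) as Hnf.
  rewrite <- Emp, <- Emq in Hnf.
  destruct (lift_shuffle glide I D o Hgs Hor Hsq _ _ Hnf p' Hp' eq_refl)
    as (p'' & Hp'' & Eh'' & Htp' & Em'').
  assert (Ep : p'' = q') by (apply (path_unique glide D o); congruence).
  subst q'.
  apply (ht_trans Htp), (ht_trans Htp'), ht_sym, Htq.
Qed.
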